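(* Let $\Sigma\in\mathbb{R}^{J\times J}$ be symmetric positive definite, let $\gamma_1>0$, $\gamma_2>0$, and fix $y\in\mathbb{R}^J$. Define the ambiguity sets \[ \mathcal{D}_{\tilde s}=\Bigl\{\mathbb{P}\in\mathcal{P}(\mathbb{R}^J):\ \mathbb{E}_{\mathbb{P}}[\tilde s]^{\top}\Sigma^{-1}\mathbb{E}_{\mathbb{P}}[\tilde s]\le\gamma_1,\ \ \mathbb{E}_{\mathbb{P}}[\tilde s\tilde s^{\top}]\preceq\gamma_2\Sigma\Bigr\} \] for a random vector $\tilde s$ in $\mathbb{R}^J$, and \[ \mathcal{D}_{\tilde\xi}=\Bigl\{\mathbb{P}\in\mathcal{P}(\mathbb{R}):\ |\mathbb{E}_{\mathbb{P}}[\tilde\xi]|\le\sqrt{\gamma_1}\sqrt{y^{\top}\Sigma y},\ \ \mathbb{E}_{\mathbb{P}}[\tilde\xi^2]\le\gamma_2\,(y^{\top}\Sigma y)\Bigr\} \] for a random variable $\tilde\xi$ in $\mathbb{R}$. Then for every Borel measurable function $f:\mathbb{R}\to\mathbb{R}$, \[ \inf_{\mathbb{P}\in\mathcal{D}_{\tilde s}}\mathbb{P}\{f(y^{\top}\tilde s)\le 0\}\ =\ \inf_{\mathbb{P}\in\mathcal{D}_{\tilde\xi}}\mathbb{P}\{f(\tilde\xi)\le 0\}. \]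
   Context: $\mathcal{P}(\mathbb{R}^n)$ denotes the set of all probability distributions on $\mathbb{R}^n$ (for which the relevant first and second moments exist); in $\mathcal{D}_{\tilde s}$, $\tilde s$ is distributed according to $\mathbb{P}$, and in $\mathcal{D}_{\tilde\xi}$, $\tilde\xi$ is distributed according to $\mathbb{P}$. $A\preceq B$ means $B-A$ is positive semidefinite. *)

From HB Require Import structures.
From mathcomp Require Import all_boot all_order all_algebra.
From mathcomp Require Import all_classical all_reals all_analysis.
Set Implicit Arguments. Unset Strict Implicit. Unset Printing Implicit Defensive.
Import Order.TTheory GRing.Theory Num.Theory.
Import numFieldNormedType.Exports.
Local Open Scope classical_set_scope.
Local Open Scope ring_scope.

(* R^J is modelled as J.-tuple R, with the library's product (Borel)
   sigma-algebra generated by the coordinate projections. *)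

Section Defs.
Variable R : realType.

Definition vec_of (J : nat) (x : J.-tuple R) : 'cV[R]_J := \col_i tnth x i.

Definition sc (M : 'M[R]_1) : R := M 0 0.

Definition psd (J : nat) (A : 'M[R]_J) : Prop :=
  forall v : 'cV[R]_J, 0 <= sc (v^T *m A *m v).

Definition loewner_le (J : nat) (A B : 'M[R]_J) : Prop := psd (B - A).

Definition spd (J : nat) (S : 'M[R]_J) : Prop :=
  S^T = S /\ forall v : 'cV[R]_J, v != 0 -> 0 < sc (v^T *m S *m v).

Definition has_moments2 (J : nat) (P : probability (J.-tuple R) R) : Prop :=
  forall i : 'I_J,
    P.-integrable setT (fun x => (tnth x i)%:E) /\
    P.-integrable setT (fun x => (tnth x i ^+ 2)%:E).

Definition mean_vec (J : nat) (P : probability (J.-tuple R) R) : 'cV[R]_J :=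
  \col_i fine (\int[P]_x (tnth x i)%:E).

Definition second_moment (J : nat) (P : probability (J.-tuple R) R) : 'M[R]_J :=
  \matrix_(i, j) fine (\int[P]_x (tnth x i * tnth x j)%:E).

Definition amb_s (J : nat) (Sigma : 'M[R]_J) (g1 g2 : R)
  : set (probability (J.-tuple R) R) :=
  [set P | has_moments2 P /\
           sc ((mean_vec P)^T *m invmx Sigma *m mean_vec P) <= g1 /\
           loewner_le (second_moment P) (g2 *: Sigma)].

Definition amb_xi (J : nat) (Sigma : 'M[R]_J) (g1 g2 : R) (y : 'cV[R]_J)
  : set (probability R R) :=
  [set P | P.-integrable setT (fun x : R => x%:E) /\
           P.-integrable setT (fun x : R => (x ^+ 2)%:E) /\
           `| fine (\int[P]_x x%:E) | <= Num.sqrt g1 * Num.sqrt (sc (y^T *m Sigma *m y)) /\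
           fine (\int[P]_x (x ^+ 2)%:E) <= g2 * sc (y^T *m Sigma *m y)].

End Defs.

From HB Require Import structures.
From mathcomp Require Import all_boot all_order all_algebra.
From mathcomp Require Import all_classical all_reals all_analysis.
From mathcomp Require Import measurable_realfun ring lra.
Import Order.TTheory GRing.Theory Num.Theory.
Import numFieldNormedType.Exports.
Local Open Scope classical_set_scope.
Local Open Scope ring_scope.

(* Both infima range over the same set of numbers.  If P lies in D_s, the law
   of y^T s lies in D_xi: its mean is bounded by Cauchy-Schwarz for the inner
   product induced by Sigma, |y^T m|^2 <= (m^T Sigma^-1 m) (y^T Sigma y), and
   its second moment is the Loewner bound tested on y.  Conversely, if Q lies
   in D_xi, then s = xi c with c = Sigma y / (y^T Sigma y) has a law in D_s,
   since c c^T <= Sigma / (y^T Sigma y) (Cauchy-Schwarz again), and y^T s = xi.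
   In the degenerate case y^T Sigma y = 0 the bound E[xi^2] <= 0 forces xi = 0
   almost surely, and both events reduce to the constant event f 0 <= 0. *)

Lemma ler_norm_sqrtM (R : rcfType) (a g q : R) : 0 <= g -> 0 <= q ->
  (`|a| <= Num.sqrt g * Num.sqrt q) = (a ^+ 2 <= g * q).
Proof. by move=> g0 q0; rewrite -sqrtrM // -sqrtr_sqr ler_sqrt ?mulr_ge0. Qed.

Section bilinear_form.
Context {R : realType} {J : nat}.
Implicit Types (S : 'M[R]_J) (u v w : 'cV[R]_J).

Lemma sc_trmx (M : 'M[R]_1) : sc M^T = sc M.
Proof. by rewrite /sc !mxE. Qed.

Lemma scD (A B : 'M[R]_1) : sc (A + B) = sc A + sc B.
Proof. by rewrite /sc !mxE. Qed.

Lemma scB (A B : 'M[R]_1) : sc (A - B) = sc A - sc B.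
Proof. by rewrite /sc !mxE. Qed.

Lemma scZ a (A : 'M[R]_1) : sc (a *: A) = a * sc A.
Proof. by rewrite /sc !mxE. Qed.

Lemma scM (A B : 'M[R]_1) : sc (A *m B) = sc A * sc B.
Proof. by rewrite /sc !mxE big_ord1. Qed.

Definition bform S u v := sc (u^T *m S *m v).

Lemma bformC S u v : S^T = S -> bform S u v = bform S v u.
Proof. by move=> ST; rewrite /bform -sc_trmx !trmx_mul trmxK ST mulmxA. Qed.

Lemma bformDl S u v w : bform S (u + v) w = bform S u w + bform S v w.
Proof. by rewrite /bform linearD /= !mulmxDl scD. Qed.

Lemma bformDr S u v w : bform S w (u + v) = bform S w u + bform S w v.
Proof. by rewrite /bform mulmxDr scD. Qed.

Lemma bformZl S a u v : bform S (a *: u) v = a * bform S u v.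
Proof. by rewrite /bform linearZ /= -!scalemxAl scZ. Qed.

Lemma bformZr S a u v : bform S u (a *: v) = a * bform S u v.
Proof. by rewrite /bform -scalemxAr scZ. Qed.

Lemma bform0r S u : bform S u 0 = 0.
Proof. by rewrite /bform mulmx0 /sc mxE. Qed.

Lemma bform_outer u v : bform (u *m u^T) v v = sc (v^T *m u) ^+ 2.
Proof.
by rewrite /bform !mulmxA -mulmxA scM -(trmxK v) -trmx_mul sc_trmx trmxK expr2.
Qed.

Lemma bform_scalemx a S u v : bform (a *: S) u v = a * bform S u v.
Proof. by rewrite /bform -scalemxAr -scalemxAl scZ. Qed.

Lemma loewner_leE (M N : 'M[R]_J) :
  loewner_le M N <-> forall v, bform M v v <= bform N v v.
Proof.
rewrite /loewner_le /psd /bform.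
by split=> h v; move: (h v); rewrite mulmxBr mulmxBl scB subr_ge0.
Qed.

Lemma loewner_le_bform M S g y :
  loewner_le M (g *: S) -> bform M y y <= g * bform S y y.
Proof. by move/loewner_leE/(_ y); rewrite bform_scalemx. Qed.

(* When [bform S y y = 0] the inverse is [0], hence [lift_dir S y = 0]. *)
Definition lift_dir S y := (bform S y y)^-1 *: (S *m y).

Lemma lift_dirE S y v : sc (v^T *m lift_dir S y) = (bform S y y)^-1 * bform S v y.
Proof. by rewrite -scalemxAr scZ mulmxA. Qed.

Section spd_form.
Variable S : 'M[R]_J.
Hypothesis S_spd : spd S.

Lemma spd_bform_ge0 w : 0 <= bform S w w.
Proof.
case: S_spd => _ Spos; have [->|w0] := eqVneq w 0; first by rewrite bform0r.
exact/ltW/Spos.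
Qed.

Lemma spd_cauchy_schwarz u v : bform S u v ^+ 2 <= bform S u u * bform S v v.
Proof.
have [->|v0] := eqVneq v 0; first by rewrite !bform0r expr2 !mul0r mulr0.
have vv_gt0 : 0 < bform S v v by case: S_spd => _; apply.
(* expand 0 <= B(s v + u, s v + u) at the minimiser s = - B(u,v) / B(v,v) *)
have := spd_bform_ge0 (- (bform S u v / bform S v v) *: v + u).
rewrite bformDl !bformDr !bformZl !bformZr (@bformC S v u (proj1 S_spd)).
set a := bform S u v; set b := bform S v v; set c := bform S u u => h.
have b0 : b != 0 by rewrite gt_eqF.
have : 0 <= c - a ^+ 2 / b by move: h; congr (0 <= _); field.
by rewrite subr_ge0 ler_pdivrMr // mulrC.
Qed.

Lemma spd_unitmx : S \in unitmx.
Proof.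
case: S_spd => _ Spos; rewrite unitmxE unitfE; apply/negP => /det0P [v v0 vS].
have : v^T != 0 by rewrite -(inj_eq (@trmx_inj _ _ _)) trmxK trmx0.
by move/Spos; rewrite trmxK vS mul0mx /sc mxE ltxx.
Qed.

Lemma cauchy_schwarz_invmx y m :
  sc (y^T *m m) ^+ 2 <= sc (m^T *m invmx S *m m) * bform S y y.
Proof.
have e1 : sc (y^T *m m) = bform S y (invmx S *m m).
  by rewrite /bform -mulmxA mulKVmx ?spd_unitmx.
have e2 : sc (m^T *m invmx S *m m) = bform S (invmx S *m m) (invmx S *m m).
  by rewrite /bform trmx_mul trmx_inv (proj1 S_spd) -!mulmxA mulKmx ?spd_unitmx.
by rewrite e1 e2 mulrC; apply: spd_cauchy_schwarz.
Qed.

Lemma proj_mean_bound g1 y m : 0 <= g1 -> sc (m^T *m invmx S *m m) <= g1 ->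
  `|sc (y^T *m m)| <= Num.sqrt g1 * Num.sqrt (bform S y y).
Proof.
move=> g1_ge0 hm; rewrite ler_norm_sqrtM ?spd_bform_ge0 //.
by apply: le_trans (cauchy_schwarz_invmx y m) _; rewrite ler_wpM2r ?spd_bform_ge0.
Qed.

Lemma bform_invmx_lift_dir y :
  bform (invmx S) (lift_dir S y) (lift_dir S y) = (bform S y y)^-1.
Proof.
rewrite bformZl bformZr.
have -> : bform (invmx S) (S *m y) (S *m y) = bform S y y.
  by rewrite /bform trmx_mul (proj1 S_spd) -!mulmxA mulKmx ?spd_unitmx.
have [->|q0] := eqVneq (bform S y y) 0; first by rewrite invr0 !mul0r.
by field.
Qed.

Lemma lift_mean_bound g1 y a : 0 <= g1 ->
  `|a| <= Num.sqrt g1 * Num.sqrt (bform S y y) ->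
  sc ((a *: lift_dir S y)^T *m invmx S *m (a *: lift_dir S y)) <= g1.
Proof.
move=> g1_ge0; rewrite ler_norm_sqrtM ?spd_bform_ge0 // => ha.
rewrite -[sc _]/(bform _ _ _) bformZl bformZr bform_invmx_lift_dir.
have [->|q0] := eqVneq (bform S y y) 0; first by rewrite invr0 !mulr0.
have q_gt0 : 0 < bform S y y by rewrite lt_def q0 spd_bform_ge0.
by rewrite mulrA -expr2 ler_pdivrMr.
Qed.

Lemma lift_dir_outer_bound y v :
  sc (v^T *m lift_dir S y) ^+ 2 <= (bform S y y)^-1 * bform S v v.
Proof.
rewrite lift_dirE exprMn.
have [->|q0] := eqVneq (bform S y y) 0; first by rewrite invr0 expr0n !mul0r.
have q_gt0 : 0 < bform S y y by rewrite lt_def q0 spd_bform_ge0.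
have -> : (bform S y y)^-1 * bform S v v =
    (bform S y y)^-1 ^+ 2 * (bform S v v * bform S y y) by field.
by rewrite ler_pM2l ?exprn_gt0 ?invr_gt0 // spd_cauchy_schwarz.
Qed.

Lemma lift_second_moment_bound g2 y e : 0 <= g2 -> e <= g2 * bform S y y ->
  loewner_le (e *: (lift_dir S y *m (lift_dir S y)^T)) (g2 *: S).
Proof.
move=> g2_ge0 he; apply/loewner_leE => v; rewrite !bform_scalemx bform_outer.
apply: le_trans (ler_wpM2r (sqr_ge0 _) he) _; rewrite -mulrA ler_wpM2l //.
have [->|q0] := eqVneq (bform S y y) 0; first by rewrite mul0r spd_bform_ge0.
have q_gt0 : 0 < bform S y y by rewrite lt_def q0 spd_bform_ge0.
apply: le_trans (ler_wpM2l (ltW q_gt0) (lift_dir_outer_bound y v)) _.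
by rewrite mulrA mulfV // mul1r.
Qed.

End spd_form.
End bilinear_form.

Section real_integrals.
Context {d} {T : measurableType d} {R : realType} {mu : {measure set T -> \bar R}}.

Lemma integrableZl_EFin c (h : T -> R) : mu.-integrable setT (EFin \o h) ->
  mu.-integrable setT (EFin \o (fun x => c * h x)).
Proof.
move=> ih; rewrite (_ : _ \o _ = (fun x => c%:E * (EFin \o h) x)%E).
  exact: integrableZl.
by apply/funext => x; rewrite /= EFinM.
Qed.

Lemma integrable_EFin_sum I (s : seq I) (F : I -> T -> R) :
  (forall i, mu.-integrable setT (EFin \o F i)) ->
  mu.-integrable setT (EFin \o (fun x => \sum_(i <- s) F i x)).
Proof.
move=> iF; rewrite (_ : _ \o _ = (fun x => \sum_(i <- s) (F i x)%:E)%E).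
  by apply: integrable_sum => // i _; exact: iF.
by apply/funext => x; rewrite /= sumEFin.
Qed.

Lemma Rintegral_sum I (s : seq I) (F : I -> T -> R) :
  (forall i, mu.-integrable setT (EFin \o F i)) ->
  \int[mu]_x (\sum_(i <- s) F i x) = \sum_(i <- s) \int[mu]_x F i x.
Proof.
move=> iF; rewrite /Rintegral.
under eq_integral do rewrite -sumEFin.
by rewrite integral_sum // sum_fine // => i _; exact: integrable_fin_num (iF i).
Qed.

Lemma integrableM_sqr (a b : T -> R) :
  measurable_fun setT a -> measurable_fun setT b ->
  mu.-integrable setT (EFin \o (fun x => a x ^+ 2)) ->
  mu.-integrable setT (EFin \o (fun x => b x ^+ 2)) ->
  mu.-integrable setT (EFin \o (fun x => a x * b x)).
Proof.
move=> ma mb ia ib; apply: le_integrable (integrableD measurableT ia ib) => //.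
  by apply/measurable_EFinP; apply: measurable_funM.
move=> x _ /=; rewrite lee_fin normrM [leRHS]ger0_norm ?addr_ge0 ?sqr_ge0 //.
rewrite -(real_normK (num_real (a x))) -(real_normK (num_real (b x))).
have := normr_ge0 (a x); have := normr_ge0 (b x); nra.
Qed.

End real_integrals.

Section distribution_integrals.
Context {d d'} {T : measurableType d} {T' : measurableType d'} {R : realType}
  {P : probability T R} {X : {mfun T >-> T'}} {g : T' -> R}.
Hypotheses (mg : measurable_fun setT g)
  (igX : P.-integrable setT (EFin \o (fun x => g (X x)))).

Lemma integrable_distribution : (distribution P X).-integrable setT (EFin \o g).
Proof. by apply: integrable_pushforward => //; exact/measurable_EFinP. Qed.

Lemma Rintegral_distribution :
  \int[distribution P X]_y g y = \int[P]_x g (X x).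
Proof. by rewrite /Rintegral integral_distribution //; exact/measurable_EFinP. Qed.

End distribution_integrals.

Section concentrated.
Context {d} {T : measurableType d} {R : realType} {P : probability T R}.

Lemma probability_ae_const (a : T) (A : set T) : measurable A ->
  {ae P, forall t, t = a} -> P A = P [set _ | A a].
Proof.
move=> mA [N [mN PN sN]].
have [Aa|Aa] := pselect (A a).
  rewrite (_ : [set _ | A a] = setT); last by apply/seteqP; split => // t _.
  have PAc0 : P (~` A) = 0.
    apply: subset_measure0 (measurableC mA) mN _ PN => t nAt.
    by apply: sN => /= ta; apply: nAt; rewrite ta.
  have := probability_setC P (measurableC mA).
  by rewrite setCK PAc0 sube0 probability_setT.
rewrite (_ : [set _ | A a] = set0) ?measure0; last by apply/seteqP; split => // t.
apply: subset_measure0 mA mN _ PN => t At.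
by apply: sN => /= ta; apply: Aa; rewrite -ta.
Qed.

End concentrated.

Lemma sqr_integral_le0_ae0 (R : realType) (Q : probability R R) :
  Q.-integrable setT (fun x => (x ^+ 2)%:E) -> fine (\int[Q]_x (x ^+ 2)%:E) <= 0 ->
  {ae Q, forall t, t = 0}.
Proof.
move=> i2 h.
have int0 : (\int[Q]_x (x ^+ 2)%:E = 0)%E.
  rewrite -(fineK (integrable_fin_num measurableT i2)); congr (_%:E).
  apply/eqP; rewrite eq_le h fine_ge0 // integral_ge0 // => x _.
  by rewrite lee_fin sqr_ge0.
have : ae_eq Q setT (fun x : R => (x ^+ 2)%:E) (cst 0%E).
  apply/ae_eq_integral_abs => //; first exact: measurable_int i2.
  by rewrite -int0; apply: eq_integral => x _; rewrite gee0_abs // lee_fin sqr_ge0.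
by apply: filterS => t /(_ I) /eqP; rewrite eqe sqrf_eq0 => /eqP.
Qed.

Section projection.
Context {R : realType} {J : nat}.

Definition proj_tuple (y : 'cV[R]_J) (x : J.-tuple R) : R := \sum_i y i 0 * tnth x i.

Lemma sc_vec_of y x : sc (y^T *m vec_of x) = proj_tuple y x.
Proof. by rewrite /sc mxE; apply: eq_bigr => i _; rewrite !mxE. Qed.

Lemma measurable_proj_tuple y : measurable_fun setT (proj_tuple y).
Proof.
apply: measurable_sum => i; apply: measurable_funM; first exact: measurable_cst.
exact: measurable_tnth.
Qed.

HB.instance Definition _ y :=
  isMeasurableFun.Build _ _ _ _ (proj_tuple y) (measurable_proj_tuple y).

Lemma proj_tuple_sqr y x : proj_tuple y x ^+ 2 =
  \sum_i \sum_j (y i 0 * y j 0) * (tnth x i * tnth x j).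
Proof.
rewrite expr2 /proj_tuple mulr_suml; apply: eq_bigr => i _; rewrite mulr_sumr.
by apply: eq_bigr => j _; ring.
Qed.

Section moments.
Context {P : probability (J.-tuple R) R}.
Hypothesis P_mom : has_moments2 P.

Lemma integrable_tnthM i j :
  P.-integrable setT (EFin \o (fun x : J.-tuple R => tnth x i * tnth x j)).
Proof.
apply: integrableM_sqr; [exact: measurable_tnth.. | exact: (P_mom i).2 |].
exact: (P_mom j).2.
Qed.

Lemma integrable_proj_tuple y : P.-integrable setT (EFin \o proj_tuple y).
Proof.
by apply: integrable_EFin_sum => i; apply: integrableZl_EFin; exact: (P_mom i).1.
Qed.

Lemma integrable_proj_tuple_sqr y :
  P.-integrable setT (EFin \o (fun x => proj_tuple y x ^+ 2)).
Proof.
under eq_fun do rewrite proj_tuple_sqr.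
apply: integrable_EFin_sum => i; apply: integrable_EFin_sum => j.
exact/integrableZl_EFin/integrable_tnthM.
Qed.

Lemma Rintegral_proj_tuple y : \int[P]_x proj_tuple y x = sc (y^T *m mean_vec P).
Proof.
rewrite Rintegral_sum => [|i]; last exact/integrableZl_EFin/(P_mom i).1.
rewrite /sc mxE; apply: eq_bigr => i _.
by rewrite RintegralZl //; [rewrite !mxE | exact: (P_mom i).1].
Qed.

Lemma Rintegral_proj_tuple_sqr y :
  \int[P]_x proj_tuple y x ^+ 2 = bform (second_moment P) y y.
Proof.
under eq_Rintegral do rewrite proj_tuple_sqr.
rewrite Rintegral_sum => [|i]; last first.
  by apply: integrable_EFin_sum => j; exact/integrableZl_EFin/integrable_tnthM.
rewrite /bform /sc mxE; under [RHS]eq_bigr do rewrite mxE mulr_suml.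
rewrite [RHS]exchange_big /=; apply: eq_bigr => i _.
rewrite Rintegral_sum => [|j]; last exact/integrableZl_EFin/integrable_tnthM.
by apply: eq_bigr => j _; rewrite RintegralZl ?integrable_tnthM // !mxE mulrAC.
Qed.

End moments.

Lemma amb_xi_distribution_proj (S : 'M[R]_J) g1 g2 y P :
  spd S -> 0 <= g1 -> amb_s S g1 g2 P ->
  amb_xi S g1 g2 y (distribution P (proj_tuple y)).
Proof.
move=> S_spd g1_ge0 [P_mom [P_mean P_sm]].
have mid : measurable_fun setT (fun x : R => x) := @measurable_id _ _ setT.
have msqr : measurable_fun setT (fun x : R => x ^+ 2) := measurable_funX 2 mid.
split; first exact: integrable_distribution mid (integrable_proj_tuple P_mom y).
split; first exact: integrable_distribution msqr (integrable_proj_tuple_sqr P_mom y).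
split.
  rewrite -[fine _]/(Rintegral _ _ _) Rintegral_distribution //;
    last exact: integrable_proj_tuple.
  by rewrite Rintegral_proj_tuple //; exact: proj_mean_bound.
rewrite -[fine _]/(Rintegral _ _ _) Rintegral_distribution //;
  last exact: integrable_proj_tuple_sqr.
by rewrite Rintegral_proj_tuple_sqr // -/(bform _ y y); exact: loewner_le_bform.
Qed.

End projection.

Section lift.
Context {R : realType} {J : nat}.

Definition lift_tuple (c : 'cV[R]_J) (t : R) : J.-tuple R := [tuple c i 0 * t | i < J].

Lemma tnth_lift_tuple c t i : tnth (lift_tuple c t) i = c i 0 * t.
Proof. exact: tnth_mktuple. Qed.

Lemma measurable_lift_tuple c : measurable_fun setT (lift_tuple c).
Proof.
apply/measurable_fun_tnthP => i.
rewrite (_ : _ \o _ = fun t => c i 0 * t); last first.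
  by apply/funext => t; rewrite /= tnth_lift_tuple.
by apply: measurable_funM => //; exact: measurable_cst.
Qed.

HB.instance Definition _ c :=
  isMeasurableFun.Build _ _ _ _ (lift_tuple c) (measurable_lift_tuple c).

Lemma proj_lift_tuple y c t : proj_tuple y (lift_tuple c t) = sc (y^T *m c) * t.
Proof.
rewrite /proj_tuple /sc mxE mulr_suml; apply: eq_bigr => i _.
by rewrite tnth_lift_tuple !mxE mulrA.
Qed.

Section lift_moments.
Context {Q : probability R R}.
Hypotheses (Q1 : Q.-integrable setT (fun x => x%:E))
  (Q2 : Q.-integrable setT (fun x => (x ^+ 2)%:E)).
Variable c : 'cV[R]_J.

Let coordE i : (fun t => tnth (lift_tuple c t) i) = (fun t => c i 0 * t).
Proof. by apply/funext => t; rewrite tnth_lift_tuple. Qed.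

Let coord_sqrE i :
  (fun t => tnth (lift_tuple c t) i ^+ 2) = (fun t => c i 0 ^+ 2 * t ^+ 2).
Proof. by apply/funext => t; rewrite tnth_lift_tuple exprMn. Qed.

Let coordME i j : (fun t => tnth (lift_tuple c t) i * tnth (lift_tuple c t) j) =
  (fun t => (c i 0 * c j 0) * t ^+ 2).
Proof. by apply/funext => t; rewrite !tnth_lift_tuple; ring. Qed.

Let integrable_coord i :
  Q.-integrable setT (EFin \o (fun t => tnth (lift_tuple c t) i)).
Proof. by rewrite coordE; exact: integrableZl_EFin. Qed.

Let integrable_coordM i j : Q.-integrable setT
  (EFin \o (fun t => tnth (lift_tuple c t) i * tnth (lift_tuple c t) j)).
Proof. by rewrite coordME; exact: integrableZl_EFin. Qed.

Lemma has_moments2_lift : has_moments2 (distribution Q (lift_tuple c)).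
Proof.
move=> i; split; apply: integrable_distribution.
- exact: measurable_tnth.
- exact: integrable_coord.
- by apply: measurable_funX; exact: measurable_tnth.
- by rewrite coord_sqrE; exact: integrableZl_EFin.
Qed.

Lemma mean_vec_lift : mean_vec (distribution Q (lift_tuple c)) = (\int[Q]_x x) *: c.
Proof.
apply/matrixP => i k; rewrite !mxE (ord1 k) -[fine _]/(Rintegral _ _ _).
rewrite (Rintegral_distribution (measurable_tnth i) (integrable_coord i)) /= coordE.
by rewrite RintegralZl // mulrC.
Qed.

Lemma second_moment_lift :
  second_moment (distribution Q (lift_tuple c)) = (\int[Q]_x x ^+ 2) *: (c *m c^T).
Proof.
apply/matrixP => i j; rewrite !mxE big_ord1 !mxE -[fine _]/(Rintegral _ _ _).
have mtnthM : measurable_fun setT (fun x : J.-tuple R => tnth x i * tnth x j).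
  by apply: measurable_funM; exact: measurable_tnth.
rewrite (Rintegral_distribution mtnthM (integrable_coordM i j)) /= coordME.
by rewrite RintegralZl // mulrC.
Qed.

End lift_moments.

Lemma amb_s_distribution_lift (S : 'M[R]_J) g1 g2 y Q :
  spd S -> 0 <= g1 -> 0 <= g2 -> amb_xi S g1 g2 y Q ->
  amb_s S g1 g2 (distribution Q (lift_tuple (lift_dir S y))).
Proof.
move=> S_spd g1_ge0 g2_ge0 [Q1 [Q2 [Q_mean Q_sm]]].
split; first exact: has_moments2_lift.
split; first by rewrite mean_vec_lift //; exact: lift_mean_bound.
by rewrite second_moment_lift //; exact: lift_second_moment_bound.
Qed.

End lift.

Theorem lemma1 (R : realType) (J : nat) (Sigma : 'M[R]_J) (g1 g2 : R)
  (y : 'cV[R]_J) (f : R -> R) :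
  spd Sigma -> 0 < g1 -> 0 < g2 -> measurable_fun setT f ->
  ereal_inf [set P [set x : J.-tuple R | f (sc (y^T *m vec_of x)) <= 0]
            | P in amb_s Sigma g1 g2] =
  ereal_inf [set P [set x : R | f x <= 0] | P in amb_xi Sigma g1 g2 y].
Proof.
move=> S_spd g1_gt0 g2_gt0 mf; congr ereal_inf; apply/seteqP; split => _ [P HP <-].
  exists (distribution P (proj_tuple y)).
    exact: amb_xi_distribution_proj (ltW g1_gt0) HP.
  by congr (P _); apply/funext => x; rewrite /= sc_vec_of.
exists (distribution P (lift_tuple (lift_dir Sigma y))).
  exact: amb_s_distribution_lift (ltW g1_gt0) (ltW g2_gt0) HP.
rewrite /distribution /pushforward.
set q := bform Sigma y y.
have projE t : sc (y^T *m vec_of (lift_tuple (lift_dir Sigma y) t)) = q^-1 * q * t.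
  by rewrite sc_vec_of proj_lift_tuple lift_dirE.
have [q0|q0] := eqVneq q 0; last first.
  by congr (P _); apply/funext => t; rewrite /= projE mulVf // mul1r.
have mfle0 : measurable [set x : R | f x <= 0].
  by rewrite -[X in measurable X]setTI; exact: mf (measurable_itv `]-oo, 0]).
case: HP => _ [P2 [_ P_sm]].
have P0 : {ae P, forall t, t = 0}.
  by apply: sqr_integral_le0_ae0 P2 _; rewrite -[sc _]/q q0 mulr0 in P_sm.
rewrite (probability_ae_const _ _ mfle0 P0) /=; congr (P _); apply/funext => t /=.
by rewrite projE q0 mulr0 mul0r.
Qed.
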